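(* Let $T$ be a locally finite rooted tree with root $r$, all of whose edges are directed towards $r$, and let $B$ and $R$ be disjoint sets of leaves of $T$. Then there exists a strong blue blockage or there exists a red blockage (for $(T,B,R)$).
   Context: Edges of $T$ are ordered pairs $st$ pointing from $s$ to $t$, oriented towards the root $r$ (so every vertex other than $r$ has exactly one outgoing edge). A \emph{leaf} is a vertex with no incoming edges. Elements of $B$ are called blue, elements of $R$ red. For an edge set $X$, $V(X)$ denotes the set of vertices incident with an edge of $X$. For an edge set $X$ and vertex $v$, the \emph{accumulation} $A(v,X)$ is the number of edges of $X$ pointing to $v$ minus the number of edges of $X$ pointing away from $v$; for edge sets $X,Y$, $A(v,X,Y)=A(v,X)-A(v,Y)$. An edge set is \emph{rayless} if the subgraph it forms contains no ray. The \emph{blue flow} $b(X)$ to $X$ is the union of the edge sets of those (directed) paths starting at a blue leaf all of whose interior vertices are not incident with an edge of $X$; the \emph{red flow} $r(X)$ is defined in the same way with red leaves in place of blue leaves. A \emph{red blockage} is a rayless edge set $X$ such that $V(X)\cap B=\emptyset$ and $A(v,X,b(X))\ge 0$ for every $v\in (V(X)\cup\{r\})\setminus R$. A \emph{blue blockage} is a rayless edge set $X$ such that $V(X)\cap R=\emptyset$ and $A(v,X,r(X))\ge 0$ for every $v\in (V(X)\cup\{r\})\setminus B$; it is \emph{strong} if $A(r,X,r(X))\ge 1$. *)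

From mathcomp Require Import all_boot all_order all_algebra.
From mathcomp Require Import finmap.
From mathcomp Require Import boolp classical_sets cardinality.
Set Implicit Arguments. Unset Strict Implicit. Unset Printing Implicit Defensive.
Import GRing.Theory Num.Theory.
Local Open Scope classical_set_scope.

(* A rooted tree T on the vertex type V is given by its root r and the parent
   map par : V -> V.  The (directed) edges of T are the ordered pairs
   (s, par s) with s <> r, i.e. every non-root vertex has exactly one outgoing
   edge, pointing towards r.  The value par r is irrelevant (the hypotheses of
   the theorem require par r = r). *)

Section Tree.
Variables (V : choiceType) (r : V) (par : V -> V).

Definition tedge (e : V * V) : Prop := e.1 <> r /\ par e.1 = e.2.

Definition rooted_tree : Prop :=
  par r = r /\ forall v : V, exists n : nat, iter n par v = r.

(* T is locally finite: every vertex has finitely many neighbours, i.e.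
   finitely many children (the parent being unique). *)
Definition locally_finite : Prop :=
  forall v : V, finite_set [set s | s <> r /\ par s = v].

Definition leaf (v : V) : Prop := ~ exists s, tedge (s, v).

Definition verts (X : set (V * V)) : set V :=
  [set v | exists e, X e /\ (v = e.1 \/ v = e.2)].

Definition accum (v : V) (X : set (V * V)) : int :=
  (#|` fset_set [set s | X (s, v)]|%:Z - #|` fset_set [set t | X (v, t)]|%:Z)%R.

Definition accum2 (v : V) (X Y : set (V * V)) : int :=
  (accum v X - accum v Y)%R.

Definition rayless (X : set (V * V)) : Prop :=
  ~ exists f : nat -> V, injective f /\
      forall i, X (f i, f i.+1) \/ X (f i.+1, f i).

(* the L-flow to X (L = B gives the blue flow b(X), L = R the red flow r(X)):
   the union of the edge sets of the directed paths
   l = v_0, v_1 = par v_0, ..., v_{n+1} = par v_n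
   starting at a leaf l in L whose interior vertices v_1, ..., v_n are not in
   V(X). The edge (v_n, v_{n+1}) belongs to such a path. *)
Definition flow (L : set V) (X : set (V * V)) : set (V * V) :=
  [set e | exists (l : V) (n : nat),
     L l /\ leaf l /\ iter n par l <> r /\
     e = (iter n par l, par (iter n par l)) /\
     forall i : nat, (0 < i <= n)%N -> ~ verts X (iter i par l)].

Definition red_blockage (B R : set V) (X : set (V * V)) : Prop :=
  X `<=` tedge /\ rayless X /\ verts X `&` B = set0 /\
  forall v, (verts X `|` [set r]) v -> ~ R v ->
    (0 <= accum2 v X (flow B X))%R.

Definition blue_blockage (B R : set V) (X : set (V * V)) : Prop :=
  X `<=` tedge /\ rayless X /\ verts X `&` R = set0 /\
  forall v, (verts X `|` [set r]) v -> ~ B v ->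
    (0 <= accum2 v X (flow R X))%R.

Definition strong_blue_blockage (B R : set V) (X : set (V * V)) : Prop :=
  blue_blockage B R X /\ (1 <= accum2 r X (flow R X))%R.

End Tree.

From mathcomp Require Import all_boot all_order all_algebra.
From mathcomp Require Import finmap.
From mathcomp Require Import boolp classical_sets cardinality.
From mathcomp Require Import zify.
Set Implicit Arguments. Unset Strict Implicit. Unset Printing Implicit Defensive.
Local Open Scope classical_set_scope.

(* Let L1 and L2 be disjoint sets of leaves.  For a set S of vertices, push S
   is the least set of non-root vertices that are in L1, or are not in L2 and
   have strictly more children in push S than children outside S: such a
   vertex can send one more unit of L1-flow to its parent than the L2-flow it
   has to absorb.  The region Z won by L1 is the greatest set whose vertices
   are in L1, or are not in L2 and have at least as many children in push Z as
   children outside Z.  The edges from push Z to parents in Z or r, oriented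
   along the stages of the inductive construction of push Z, form a rayless
   edge set whose accumulation against the L2-flow is nonnegative at every
   vertex and at least c+ - c- at r, where c+ and c- count the children of r
   in push Z and outside Z.  By determinacy every non-root vertex not won by
   L2 is in push Z for L1, so c-(red) <= c+(blue) and c-(blue) <= c+(red).
   Hence either c+ > c- for blue, giving a strong blue blockage, or
   c+ <= c- for blue, whence c+ >= c- for red, giving a red blockage. *)

Lemma card_fset_set_le (V : choiceType) (A B : set V) :
  finite_set B -> A `<=` B -> (#|` fset_set A| <= #|` fset_set B|)%N.
Proof.
move=> finB AB; have finA := sub_finite_set AB finB.
by apply: fsubset_leq_card; rewrite -fset_set_sub.
Qed.

Lemma card_fset_set_gt0 (V : choiceType) (A : set V) :
  (0 < #|` fset_set A|)%N -> exists x, A x.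
Proof.
move=> A_gt0; apply: contrapT => noA.
have A0 : A = set0 by apply/seteqP; split => x //= Ax; apply: noA; exists x.
by move: A_gt0; rewrite A0 fset_set0 cardfs0.
Qed.

Lemma card_fset_set_le1 (V : choiceType) (A : set V) (x : V) :
  A `<=` [set x] -> (#|` fset_set A| <= 1)%N.
Proof.
by move=> /(card_fset_set_le (finite_set1 x)); rewrite fset_set1 cardfs1.
Qed.

Lemma card_fset_set0 (V : choiceType) (A : set V) :
  (forall x, ~ A x) -> #|` fset_set A| = 0%N.
Proof.
move=> noA; suff -> : A = set0 by rewrite fset_set0 cardfs0.
by apply/seteqP; split => x // /noA.
Qed.

Lemma exists_false_true_step (Q : nat -> Prop) n :
  ~ Q 0%N -> Q n -> exists j, (j < n)%N /\ ~ Q j /\ Q j.+1.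
Proof.
elim: n => [|n IH] // nQ0 Qn.
have [Qn'|] := pselect (Q n); last by exists n.
by have [j [jn Qj]] := IH nQ0 Qn'; exists j; split => //; apply: ltnW.
Qed.

Lemma chain_cover_seq (T : eqType) (F : nat -> set T) (s : seq T) :
  (forall n m, (n <= m)%N -> F n `<=` F m) ->
  (forall x, x \in s -> exists n, F n x) -> exists N, forall x, x \in s -> F N x.
Proof.
move=> Fmono; elim: s => [|a s IH] Hs; first by exists 0%N.
have [na Ha] := Hs a (mem_head _ _).
have [N HN] := IH (fun x xs => Hs x (@mem_behead _ (a :: s) x xs)).
exists (maxn na N) => x; rewrite inE => /orP [/eqP ->|xs].
  exact: Fmono (leq_maxl _ _) _ Ha.
exact: Fmono (leq_maxr _ _) _ (HN x xs).
Qed.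

Section LocallyFinite.
Variables (V : choiceType) (r : V) (par : V -> V).
Hypothesis locfin : locally_finite r par.

Definition children (v : V) : set V := [set s | s <> r /\ par s = v].

Definition nchildren (v : V) (A : set V) : nat := #|` fset_set (children v `&` A)|.

Lemma nchildren_le v (A B : set V) :
  (forall x, children v x -> A x -> B x) -> (nchildren v A <= nchildren v B)%N.
Proof.
move=> AB; apply: card_fset_set_le; first exact: finite_setIl (locfin v).
by move=> x [cx Ax]; split => //; apply: AB.
Qed.

Lemma nchildren_gt0 v A x : children v x -> A x -> (0 < nchildren v A)%N.
Proof.
move=> cx Ax; apply: (@leq_trans #|` fset_set [set x]|).
  by rewrite fset_set1 cardfs1.
apply: card_fset_set_le; first exact: finite_setIl (locfin v).
by move=> y ->.
Qed.

Lemma nchildren_gt0P v A : (0 < nchildren v A)%N -> exists x, children v x /\ A x.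
Proof. by move/card_fset_set_gt0 => [x [cx Ax]]; exists x. Qed.

Section Push.
Variables (L1 L2 : set V).

Fixpoint push_stage (S : set V) (n : nat) : set V :=
  match n with
  | 0 => set0
  | k.+1 => [set v | v <> r /\ (L1 v \/ (~ L2 v /\
             ((nchildren v (~` S)).+1 <= nchildren v (push_stage S k))%N))]
  end.

Definition push (S : set V) : set V := [set v | exists n, push_stage S n v].

Definition phi (S : set V) : set V :=
  [set v | L1 v \/ (~ L2 v /\ (nchildren v (~` S) <= nchildren v (push S))%N)].

Definition won : set V := [set v | exists S, S `<=` phi S /\ S v].

Lemma push_stageS S n : push_stage S n `<=` push_stage S n.+1.
Proof.
elim: n => [|n IH] v //= [vr [L1v|[L2v Hv]]]; split => //; first by left.
right; split => //; apply: leq_trans Hv _; apply: nchildren_le => x _; exact: IH.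
Qed.

Lemma push_stage_le S n m : (n <= m)%N -> push_stage S n `<=` push_stage S m.
Proof.
move=> /subnK <-; elim: (m - n)%N => [|k IH] v Hv //=.
exact/push_stageS/IH.
Qed.

Lemma push_stage_subset S S' n : S `<=` S' -> push_stage S n `<=` push_stage S' n.
Proof.
move=> SS'; elim: n => [|n IH] v //= [vr [L1v|[L2v Hv]]]; split => //; first by left.
right; split => //; apply: leq_trans _ (leq_trans Hv _).
- by rewrite ltnS; apply: nchildren_le => x _ /= nS'x Sx; apply/nS'x/SS'.
- by apply: nchildren_le => x _; apply: IH.
Qed.

Lemma push_subset S S' : S `<=` S' -> push S `<=` push S'.
Proof. by move=> SS' v [n Hv]; exists n; apply: push_stage_subset Hv. Qed.

Lemma push_neq_root S v : push S v -> v <> r.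
Proof. by case=> -[|n] //= []. Qed.

Lemma push_leaf S v : v <> r -> L1 v -> push S v.
Proof. by move=> vr L1v; exists 1%N; split => //; left. Qed.

Lemma push_stage_first S n v :
  push_stage S n v -> exists k, push_stage S k.+1 v /\ ~ push_stage S k v.
Proof.
elim: n => [|n IH] //= Hv.
by have [/IH|] := pselect (push_stage S n v); last exists n.
Qed.

Lemma push_stage_finite S (A : set V) :
  finite_set A -> A `<=` push S -> exists N, A `<=` push_stage S N.
Proof.
move=> finA AP.
have [||N HN] := @chain_cover_seq _ (push_stage S) (fset_set A).
- exact: push_stage_le.
- by move=> x; rewrite in_fset_set // inE => /AP.
by exists N => x Ax; apply: HN; rewrite in_fset_set // inE.
Qed.

(* Local finiteness: the children in push S all appear at a common stage. *)
Lemma push_closed S v : v <> r -> ~ L2 v ->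
  ((nchildren v (~` S)).+1 <= nchildren v (push S))%N -> push S v.
Proof.
move=> vr L2v Hv.
have [N HN] := @push_stage_finite S (children v `&` push S)
  (finite_setIl _ (locfin v)) (fun x => @proj2 _ _).
exists N.+1; split => //; right; split => //.
by apply: leq_trans Hv _; apply: nchildren_le => x cx Px; apply: HN.
Qed.

Lemma phi_subset S S' : S `<=` S' -> phi S `<=` phi S'.
Proof.
move=> SS' v [L1v|[L2v Hv]]; [by left|right; split => //].
apply: leq_trans _ (leq_trans Hv _).
- by apply: nchildren_le => x _ /= nS'x Sx; apply/nS'x/SS'.
- by apply: nchildren_le => x _; apply: push_subset.
Qed.

Lemma won_postfix : won `<=` phi won.
Proof.
move=> v [S [Spost Sv]]; apply: (@phi_subset S); last exact: Spost.
by move=> x Sx; exists S.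
Qed.

Lemma won_coind S : S `<=` phi S -> S `<=` won.
Proof. by move=> Spost v Sv; exists S. Qed.

Lemma push_won : push won `<=` won.
Proof.
move=> v0 Pv0; apply: (@won_coind (won `|` push won)); last by right.
move=> v [vZ|[n Hn]]; first by apply: phi_subset (won_postfix vZ) => x; left.
have [k [[vr [L1v|[L2v Hk]]] _]] := push_stage_first Hn; first by left.
right; split => //.
apply: (@leq_trans (nchildren v (~` won))).
  by apply: nchildren_le => x _ /= nx zx; apply: nx; left.
apply: leq_trans (ltnW Hk) _.
by apply: nchildren_le => x _ Hx; exists k; apply: push_stage_subset Hx => y; left.
Qed.

End Push.

(* Determinacy: what L2 cannot push from its won region is won by L1, and what
   L2 does not win is pushed by L1 against that region.  Both follow by
   exhibiting post-fixpoints of phi. *)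
Definition unpushable (L1 L2 : set V) : set V :=
  [set x | x <> r /\ ~ push L2 L1 (won L2 L1) x].

Lemma not_won_push (L1 L2 : set V) c : c <> r -> ~ won L2 L1 c ->
  push L1 L2 (unpushable L1 L2) c.
Proof.
move=> cr nZc; apply: contrapT => nPc; apply: nZc.
pose S := [set c | c <> r /\ ~ push L1 L2 (unpushable L1 L2) c] `|` won L2 L1.
apply: (@won_coind L2 L1 S); last by left.
move=> x [[xr nPx]|xZ]; last by apply: phi_subset (won_postfix xZ) => y; right.
have [L2x|L2x] := pselect (L2 x); first by left.
have L1x : ~ L1 x by move=> L1x; apply/nPx/push_leaf.
right; split => //.
have le1 : (nchildren x (push L1 L2 (unpushable L1 L2)) <=
            nchildren x (~` unpushable L1 L2))%N.
  by rewrite leqNgt; apply/negP => Hlt; apply/nPx/push_closed.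
apply: (@leq_trans (nchildren x (push L1 L2 (unpushable L1 L2)))).
  by apply: nchildren_le => y [yr _] /= nS; apply: contrapT => nP; apply: nS; left.
apply: leq_trans le1 _; apply: (@leq_trans (nchildren x (push L2 L1 (won L2 L1)))).
  by apply: nchildren_le => y [yr _] /= nW; apply: contrapT => nP; apply: nW.
by apply: nchildren_le => y _; apply: push_subset => z zZ; right.
Qed.

Lemma unpushable_won (L1 L2 : set V) : unpushable L1 L2 `<=` won L1 L2.
Proof.
apply: won_coind => x [xr nPx].
have [L1x|L1x] := pselect (L1 x); first by left.
have L2x : ~ L2 x by move=> L2x; apply/nPx/push_leaf.
right; split => //.
have le1 : (nchildren x (push L2 L1 (won L2 L1)) <= nchildren x (~` won L2 L1))%N.
  by rewrite leqNgt; apply/negP => Hlt; apply/nPx/push_closed.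
apply: (@leq_trans (nchildren x (push L2 L1 (won L2 L1)))).
  by apply: nchildren_le => y [yr _] /= nW; apply: contrapT => nP; apply: nW.
apply: leq_trans le1 _.
by apply: nchildren_le => y [yr _] nZ; apply: not_won_push.
Qed.

Lemma nchildren_not_won_le (L1 L2 : set V) v :
  (nchildren v (~` won L2 L1) <= nchildren v (push L1 L2 (won L1 L2)))%N.
Proof.
apply: nchildren_le => y [yr _] nZy.
by apply: push_subset (@unpushable_won L1 L2) _ _; apply: not_won_push.
Qed.

End LocallyFinite.

Section Blockage.
Variables (V : choiceType) (r : V) (par : V -> V).
Hypothesis rt : rooted_tree r par.
Hypothesis locfin : locally_finite r par.
Variables (L1 L2 : set V).
Hypothesis L1_leaf : L1 `<=` leaf r par.
Hypothesis L2_leaf : L2 `<=` leaf r par.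
Hypothesis L12 : L1 `&` L2 = set0.

Let Z := won r par L1 L2.
Let P := push_stage r par L1 L2 Z.
Let Pu := push r par L1 L2 Z.

(* An edge into a vertex of push Z must climb a stage of its construction. *)
Definition block : set (V * V) :=
  [set e | e.1 <> r /\ par e.1 = e.2 /\ Pu e.1 /\ (Z e.2 \/ e.2 = r) /\
           (Pu e.2 -> exists m, P m e.1 /\ ~ P m e.2)].

Lemma L12_disj v : L1 v -> L2 v -> False.
Proof. by move=> L1v L2v; have : (L1 `&` L2) v by []; rewrite L12. Qed.

Lemma block_tedge : block `<=` tedge r par.
Proof. by move=> e [? [? _]]. Qed.

Lemma iter_par_root n : iter n par r = r.
Proof. by elim: n => //= n ->; case: rt. Qed.

Lemma iter_par_le l i n : (i <= n)%N -> iter i par l = r -> iter n par l = r.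
Proof. by move=> /subnK <- H; rewrite iterD H iter_par_root. Qed.

Lemma push_not_L2 v : Pu v -> ~ L2 v.
Proof.
move=> [n Hn]; have [k [[_ [L1v|[L2v _]]] _]] := push_stage_first Hn => // L2v'.
exact: L12_disj L1v L2v'.
Qed.

Lemma won_not_L2 v : Z v -> ~ L2 v.
Proof. by move=> /(won_postfix locfin) [L1v L2v|[]//]; exact: L12_disj L1v L2v. Qed.

(* The tail is a child pushed at the stage just before w, or a child in push Z. *)
Lemma block_in_exists w : Z w -> ~ L1 w ->
  (exists c, children r par w c /\ ~ Z c) -> exists c, block (c, w).
Proof.
move=> Zw L1w [c [cw nZc]].
have [//|[_ Hw]] := won_postfix locfin Zw.
have pos : (0 < nchildren r par w (~` Z))%N := nchildren_gt0 locfin cw nZc.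
have [[n Hn]|nPw] := pselect (Pu w).
  have [k [[wr [//|[_ Hk]]] nPk]] := push_stage_first Hn.
  have [c' [[c'r pc'] Pc']] := nchildren_gt0P (leq_ltn_trans (leq0n _) Hk).
  exists c'; do 3!split => //; first by exists k.
  by split; [left|move=> _; exists k].
have [c' [[c'r pc'] Pc']] := nchildren_gt0P (leq_trans pos Hw).
by exists c'; do 3!split => //; split; [left|].
Qed.

(* Along an L2-flow path from outside Z into Z, the first vertex of Z would
   receive an edge of block, so it would lie in V(block). *)
Lemma flow_in_not_won s v : flow r par L2 block (s, v) ->
  children r par v s /\ ~ Z s.
Proof.
move=> [l [n [L2l [_ [nr [[-> ->] nv]]]]]].
split; first by split.
move=> Zn; have nZl : ~ Z l by move=> /won_not_L2.
have [j [jn [nZj Zj1]]] :=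
  @exists_false_true_step (fun i => Z (iter i par l)) n nZl Zn.
have jr : iter j par l <> r by move=> /(iter_par_le (ltnW jn)).
have L1j1 : ~ L1 (iter j.+1 par l) by move=> /L1_leaf; apply; exists (iter j par l).
have jch : children r par (iter j.+1 par l) (iter j par l) := conj jr erefl.
have [c Xc] := block_in_exists Zj1 L1j1 (ex_intro _ _ (conj jch nZj)).
by apply: (nv j.+1) => //; exists (c, iter j.+1 par l); split => //; right.
Qed.

Lemma push_stage_no_descent n (g : nat -> V) :
  (forall k, exists m, P m (g k.+1) /\ ~ P m (g k)) -> ~ P n (g 0%N).
Proof.
elim/ltn_ind: n g => n IH g Hg Pn.
have [m [Pm nPm]] := Hg 0%N.
have mn : (m < n)%N.
  by rewrite ltnNge; apply/negP => nm; apply: nPm; exact: push_stage_le nm _ Pn.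
exact: (IH m mn (fun k => g k.+1) (fun k => Hg k.+1) Pm).
Qed.

(* A ray cannot climb forever since every vertex reaches r, and once it steps
   down it keeps stepping down, through strictly decreasing stages. *)
Lemma block_rayless : rayless block.
Proof.
move=> [f [finj Hf]].
have [N HN] : exists N, block (f N.+1, f N).
  apply: contrapT => nex.
  have up i : block (f i, f i.+1).
    by case: (Hf i) => // H; exfalso; apply: nex; exists i.
  have fi i : f i = iter i par (f 0%N).
    by elim: i => [|i IH] //=; rewrite -IH; have [_ [-> _]] := up i.
  have [_ /(_ (f 0%N)) [n Hn]] := rt.
  by have [+ _] := up n; rewrite fi Hn.
have down k : block (f (k + N).+1, f (k + N)).
  elim: k => [|k IH] //; case: (Hf (k.+1 + N)) => // H.
  have [_ [p1 _]] := IH; have [_ [p2 _]] := H.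
  rewrite /= addSn in p1 p2.
  have : f (k + N).+2 = f (k + N) by rewrite -p2 p1.
  by move/finj => E; exfalso; move: E; lia.
pose g k := f (k.+1 + N).
have Pg k : Pu (g k) by have [_ [_ [H _]]] := down k.
have Hg k : exists m, P m (g k.+1) /\ ~ P m (g k).
  by have [_ [_ [_ [_ H]]]] := down k.+1; exact: H (Pg k).
have [n Pn] := Pg 0%N.
exact: push_stage_no_descent Hg Pn.
Qed.

Lemma block_verts_L2 : verts block `&` L2 = set0.
Proof.
apply/seteqP; split=> v //= [[e [Xe [->| ->]]] L2v].
  by have [_ [_ [Pe _]]] := Xe; exact: push_not_L2 Pe L2v.
have [e1r [pe [_ [[Ze|er] _]]]] := Xe; first exact: won_not_L2 Ze L2v.
by apply: (L2_leaf L2v); exists e.1; split.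
Qed.

Let block_in v := #|` fset_set [set s | block (s, v)]|.
Let block_out v := #|` fset_set [set t | block (v, t)]|.
Let flow_in v := #|` fset_set [set s | flow r par L2 block (s, v)]|.
Let flow_out v := #|` fset_set [set t | flow r par L2 block (v, t)]|.

Lemma accum2_block v :
  accum2 v block (flow r par L2 block) =
  ((block_in v)%:Z - (block_out v)%:Z - ((flow_in v)%:Z - (flow_out v)%:Z))%R.
Proof. by []. Qed.

Lemma block_in_ge v A : (forall x, children r par v x -> A x -> block (x, v)) ->
  (nchildren r par v A <= block_in v)%N.
Proof.
move=> H; apply: card_fset_set_le.
  by apply: sub_finite_set (locfin v) => s [sr [ps _]].
by move=> x [cx Ax]; apply: H.
Qed.

Lemma block_out_le1 v : (block_out v <= 1)%N.
Proof. by apply: (@card_fset_set_le1 _ _ (par v)) => t [_ [/= <- _]]. Qed.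

Lemma block_out0 v : ~ (Pu v /\ v <> r) -> block_out v = 0%N.
Proof. by move=> H; apply: card_fset_set0 => t [vr [_ [Pv _]]]; apply: H. Qed.

Lemma flow_in_le v : (flow_in v <= nchildren r par v (~` Z))%N.
Proof.
apply: card_fset_set_le; first exact: finite_setIl (locfin v).
by move=> s /flow_in_not_won.
Qed.

Lemma flow_out_root : flow_out r = 0%N.
Proof. by apply: card_fset_set0 => t [l [n [_ [_ [nr [[E _] _]]]]]]; apply: nr. Qed.

Lemma block_balance_push v : Pu v -> ~ L1 v ->
  (block_out v + flow_in v <= block_in v)%N.
Proof.
move=> [n Hn] L1v; have [k [[vr [//|[_ Hk]]] nPk]] := push_stage_first Hn.
have {}Hk : ((nchildren r par v (~` Z)).+1 <= nchildren r par v (P k))%N := Hk.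
have : (nchildren r par v (P k) <= block_in v)%N.
  apply: block_in_ge => x [xr px] Px; do 3!split => //; first by exists k.
  by split; [left; apply: (push_won locfin); exists n|move=> _; exists k].
by have := flow_in_le v; have := block_out_le1 v; lia.
Qed.

Lemma block_balance_won v : Z v -> ~ L1 v -> ~ Pu v ->
  (flow_in v <= block_in v)%N.
Proof.
move=> Zv L1v nPv; have [//|[_ Hv]] := won_postfix locfin Zv.
have {}Hv : (nchildren r par v (~` Z) <= nchildren r par v Pu)%N := Hv.
have : (nchildren r par v Pu <= block_in v)%N.
  by apply: block_in_ge => x [xr px] Px; do 3!split => //; split; [left|].
by have := flow_in_le v; lia.
Qed.

Lemma block_accum_ge0 v : verts block v -> v <> r -> ~ L1 v ->
  (0 <= accum2 v block (flow r par L2 block))%R.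
Proof.
move=> vX vr L1v; rewrite accum2_block.
have [Pv|nPv] := pselect (Pu v); first by have := block_balance_push Pv L1v; lia.
have out0 : block_out v = 0%N by apply: block_out0 => -[].
case: vX => e [Xe [ve|ve]].
  by have [_ [_ [Pe _]]] := Xe; exfalso; apply: nPv; rewrite ve.
have [_ [_ [_ [[Ze|er] _]]]] := Xe; last by rewrite -ve in er.
rewrite -ve in Ze; have := block_balance_won Ze L1v nPv; lia.
Qed.

Lemma block_accum_root :
  ((nchildren r par r Pu)%:Z - (nchildren r par r (~` Z))%:Z <=
   accum2 r block (flow r par L2 block))%R.
Proof.
rewrite accum2_block flow_out_root block_out0; last by case.
have : (nchildren r par r Pu <= block_in r)%N.
  apply: block_in_ge => x [xr px] Px; do 3!split => //.
  by split; [right|move=> /push_neq_root].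
by have := flow_in_le r; lia.
Qed.

Lemma block_blue_blockage : (0 <= accum2 r block (flow r par L2 block))%R ->
  blue_blockage r par L1 L2 block.
Proof.
move=> root_ge0; split; [exact: block_tedge|split; [exact: block_rayless|split]].
  exact: block_verts_L2.
move=> v [vX|->] // L1v; have [->|vr] := pselect (v = r) => //.
exact: block_accum_ge0.
Qed.

End Blockage.

Unset Implicit Arguments.

Theorem theorem1p1 (V : choiceType) (r : V) (par : V -> V)
  (B R : set V) :
  rooted_tree r par ->
  locally_finite r par ->
  B `<=` leaf r par -> R `<=` leaf r par -> B `&` R = set0 ->
  (exists X : set (V * V), strong_blue_blockage r par B R X) \/
  (exists X : set (V * V), red_blockage r par B R X).
Proof.
move=> rt lf BL RL BR.
have RB : R `&` B = set0 by rewrite setIC.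
have dualB := nchildren_not_won_le lf B R r.
have dualR := nchildren_not_won_le lf R B r.
have rootB := block_accum_root rt lf BL BR.
have rootR := block_accum_root rt lf RL RB.
have [le_push|lt_push] := leqP (nchildren r par r (push r par B R (won r par B R)))
                                (nchildren r par r (~` won r par B R)).
  (* A red blockage for (B, R) is, by definition, a blue blockage for (R, B). *)
  right; exists (block r par R B).
  by apply: (block_blue_blockage rt lf RL BL RB); lia.
left; exists (block r par B R); split; last by lia.
by apply: (block_blue_blockage rt lf BL RL BR); lia.
Qed.
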